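(* Let $\mathbb F_q$ be a finite field with $q$ elements, let $n\ge 2$, let $a_1,\dots,a_n,b\in\mathbb F_q^*$, and let $m_1,\dots,m_n,k,k_1,\dots,k_n$ be positive integers. Put $M=\operatorname{lcm}[m_1,\dots,m_n]$ and $d_j=\gcd(m_j,q-1)$ for $j=1,\dots,n$. Assume that $$\gcd\Bigl(\sum_{j=1}^n \frac{k_jM}{m_j}-kM,\;q-1\Bigr)=1.$$ Then $$N\bigl[(a_1x_1^{m_1}+\dots+a_nx_n^{m_n})^k=bx_1^{k_1}\cdots x_n^{k_n}\bigr]=(q-1)^{n-1}+N\bigl[a_1x_1^{d_1}+\dots+a_nx_n^{d_n}=0\bigr]-\frac{q}{q-1}\,N^*\bigl[a_1x_1^{d_1}+\dots+a_nx_n^{d_n}=0\bigr].$$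
   Context: For polynomials $f_1,f_2$ over $\mathbb F_q$, $N[f_1(x_1,\dots,x_n)=f_2(x_1,\dots,x_n)]$ denotes the number of solutions $(x_1,\dots,x_n)\in\mathbb F_q^n$ of the equation, and $N^*[\cdot]$ denotes the number of such solutions with $x_1\cdots x_n\ne 0$. $\mathbb F_q^*=\mathbb F_q\setminus\{0\}$. *)

From HB Require Import structures.
From mathcomp Require Import all_boot all_order all_algebra all_field.
Set Implicit Arguments. Unset Strict Implicit. Unset Printing Implicit Defensive.
Import Order.TTheory GRing.Theory Num.Theory.
Local Open Scope ring_scope.

Definition Ncount (F : finFieldType) (n : nat) (P : {ffun 'I_n -> F} -> bool) : nat :=
  #|[set x : {ffun 'I_n -> F} | P x]|.

Definition Nstar (F : finFieldType) (n : nat) (P : {ffun 'I_n -> F} -> bool) : nat :=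
  #|[set x : {ffun 'I_n -> F} | P x && [forall i, x i != 0]]|.

From HB Require Import structures.
From mathcomp Require Import all_boot all_order all_algebra all_field.
From mathcomp Require Import ring.
Import Order.TTheory GRing.Theory Num.Theory.
Set Implicit Arguments. Unset Strict Implicit.
Local Open Scope ring_scope.

(* The torus F^* acts on points with nonzero coordinates by
   t.x = (t^(M/m_j) x_j)_j, which multiplies the diagonal form S by t^M and the
   monomial x^kk by t^w, where w = sum_j k_j M/m_j.  Along the orbit of such a
   point y the equation becomes t^(w - kM) = S(y)^k / (b y^kk); as w - kM is
   prime to q - 1, the map t |-> t^(w - kM) permutes F^*, so there is exactly
   one solution t if S(y) <> 0 and none otherwise.  Double counting gives
   (q - 1) N^*[equation] = (q - 1)^n - N^*[S = 0], while a point with a zero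
   coordinate solves the equation iff S = 0.  Finally, t |-> t^m_j and
   t |-> t^d_j have fibres of the same size over every value, so replacing the
   exponents m_j by d_j changes neither N[S = 0] nor N^*[S = 0]. *)

Lemma card_set_sum (T : finType) (P : pred T) : #|[set x | P x]| = (\sum_x P x)%N.
Proof. by rewrite -sum1dep_card big_mkcond; apply: eq_bigr => x _; case: (P x). Qed.

Lemma card_set_split (T : finType) (P Q : pred T) :
  #|[set x | P x]| = (#|[set x | P x && Q x]| + #|[set x | P x && ~~ Q x]|)%N.
Proof.
rewrite !card_set_sum -big_split; apply: eq_bigr => x _.
by case: (P x); case: (Q x).
Qed.

Lemma card_preimset_fibres (T U : finType) (h : T -> U) (Q : pred U) :
  #|[set x | Q (h x)]| = (\sum_(y | Q y) #|[set x | h x == y]|)%N.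
Proof.
rewrite -sum1dep_card (partition_big h Q) //=; apply: eq_bigr => y Qy.
by rewrite -sum1dep_card; apply: eq_bigl => x; rewrite andbC; case: eqP => //= ->.
Qed.

Section CoordinatewiseMaps.
Variables (I T U : finType).

Definition map_coords (f : I -> T -> U) (x : {ffun I -> T}) : {ffun I -> U} :=
  [ffun i => f i (x i)].

Lemma card_map_coords_fibre (f : I -> T -> U) (y : {ffun I -> U}) :
  #|[set x | map_coords f x == y]| = (\prod_i #|[set t | f i t == y i]|)%N.
Proof.
under eq_bigr do rewrite card_set_sum.
rewrite bigA_distr_bigA card_set_sum /=; apply: eq_bigr => x _.
have -> : (map_coords f x == y) = [forall i, f i (x i) == y i].
  apply/eqP/forallP => [<- i | fxy]; first by rewrite ffunE.
  by apply/ffunP => i; rewrite ffunE; apply/eqP.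
case: forallP => [fxy | /forallP/forallPn [i /negPf fxy]].
  by rewrite big1 // => i _; rewrite fxy.
by rewrite (bigD1 i) //= fxy.
Qed.

Lemma card_map_coords_eq (f g : I -> T -> U) (Q : pred {ffun I -> U}) :
  (forall i u, #|[set t | f i t == u]| = #|[set t | g i t == u]|) ->
  #|[set x | Q (map_coords f x)]| = #|[set x | Q (map_coords g x)]|.
Proof.
move=> fg; rewrite !card_preimset_fibres; apply: eq_bigr => y _.
by rewrite !card_map_coords_fibre; apply: eq_bigr.
Qed.

End CoordinatewiseMaps.

Section PowerMaps.
Variable F : finFieldType.
Local Notation q := #|F|.

Lemma expf_card_pred (t : F) : t != 0 -> t ^+ q.-1 = 1.
Proof.
move=> t0; apply: (mulfI t0); rewrite mulr1 -exprS prednK ?expf_card //.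
by apply/card_gt0P; exists t.
Qed.

(* Bezout, together with t^(q-1) = 1. *)
Lemma exprz_gcdz (t : F) (z : int) :
  t != 0 -> exists u : int, t ^ gcdz z q.-1 = (t ^ z) ^ u.
Proof.
move=> t0; have [u [v <-]] := Bezoutz z q.-1; exists u.
rewrite expfzDr // -!exprz_exp [(t ^ v) ^ _]exprzAC -exprnP expf_card_pred //.
by rewrite exp1rz mulr1 exprzAC.
Qed.

Lemma set_expr_eq0 (m : nat) : (0 < m)%N -> [set t : F | t ^+ m == 0] = [set 0].
Proof. by move=> m0; apply/setP => t; rewrite !inE expf_eq0 m0. Qed.

Lemma card_expr_fibre_kernel (m : nat) (u : F) : u != 0 ->
  #|[set t | t ^+ m == u ^+ m]| = #|[set t : F | t ^+ m == 1]|.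
Proof.
move=> u0; rewrite -(card_imset _ (mulfI u0)); apply: eq_card => t.
rewrite inE; apply/eqP/imsetP => [tu | [v]]; last first.
  by rewrite inE => /eqP v1 ->; rewrite exprMn v1 mulr1.
exists (u^-1 * t); last by rewrite mulrA divff ?mul1r.
by rewrite inE exprMn tu exprVn mulVf // expf_neq0.
Qed.

(* Both power maps have the same kernel and the same image, and their nonempty
   fibres over nonzero values are cosets of the kernel. *)
Lemma card_expr_fibre_gcdn (m : nat) (s : F) : (0 < m)%N ->
  #|[set t | t ^+ m == s]| = #|[set t | t ^+ gcdn m q.-1 == s]|.
Proof.
move=> m0; set g := gcdn m q.-1.
have g0 : (0 < g)%N by rewrite gcdn_gt0 m0.
have [-> | s0] := eqVneq s 0; first by rewrite !set_expr_eq0.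
have gE (t : F) : t != 0 -> exists u : int, t ^+ g = (t ^ u) ^+ m.
  move=> t0; have [u] := exprz_gcdz m t0.
  by rewrite exprzAC; exists u.
have mE (t : F) : t ^+ m = (t ^+ (m %/ g)) ^+ g.
  by rewrite -exprM divnK ?dvdn_gcdl.
have kerE : [set t : F | t ^+ m == 1] = [set t | t ^+ g == 1].
  apply/setP => t; rewrite !inE; apply/eqP/eqP => [tm1 | tg1]; last first.
    by rewrite mE -exprM mulnC exprM tg1 expr1n.
  have t0 : t != 0.
    by apply: contra_eq_neq tm1 => ->; rewrite expr0n gtn_eqF // eq_sym oner_eq0.
  have [u ->] := gE t t0.
  by rewrite exprnP exprzAC -exprnP tm1 exp1rz.
have [w /eqP ws | no_root_m] := pickP (fun w : F => w ^+ m == s).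
  have w0 : w != 0 by apply: contraNneq s0 => w0; rewrite -ws w0 expr0n gtn_eqF.
  by rewrite -ws {2}mE !card_expr_fibre_kernel ?kerE // expf_neq0.
have no_root_g (w : F) : w ^+ g != s.
  have [-> | w0] := eqVneq w 0; first by rewrite expr0n gtn_eqF // eq_sym.
  by have [u ->] := gE w w0; rewrite no_root_m.
rewrite (_ : [set t | _] = set0); last by apply/setP => t; rewrite !inE no_root_m.
rewrite (_ : [set t | _] = set0) //.
by apply/setP => t; rewrite !inE (negPf (no_root_g t)).
Qed.

Lemma card_exprz_eq (z : int) (c : F) : gcdz z q.-1 = 1 ->
  #|[set t | (t != 0) && (t ^ z == c)]| = (c != 0).
Proof.
move=> z_cop; set D := [set t : F | t != 0].
have z_inj : {in D &, injective (fun t => t ^ z)}.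
  move=> t s; rewrite !inE => t0 s0 ts.
  have ts0 : t / s != 0 by rewrite mulf_neq0 ?invr_eq0.
  have [u] := exprz_gcdz z ts0.
  rewrite z_cop -[(t / s) ^ 1]/((t / s) ^+ 1) expr1 expfzMl -expfV ts.
  by rewrite divff ?expfz_neq0 // exp1rz => /divr1_eq.
have imD : [set t ^ z | t in D] = D.
  apply/eqP; rewrite eqEcard card_in_imset // leqnn andbT.
  by apply/subsetP => x /imsetP [t]; rewrite inE => t0 ->; rewrite inE expfz_neq0.
have [-> | c0] := eqVneq c 0.
  rewrite (_ : [set t | _] = set0) ?cards0 //; apply/setP => t; rewrite !inE.
  by have [-> | t0] := eqVneq t 0; rewrite ?eqxx //= (negPf (expfz_neq0 _ t0)).
have : c \in [set t ^ z | t in D] by rewrite imD inE.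
case/imsetP => t0; rewrite inE => t00 ->; rewrite [RHS]/= -(cards1 t0).
apply: eq_card => t; rewrite !inE; apply/andP/eqP => [[t_0 /eqP] | ->] //.
by apply: z_inj; rewrite // inE.
Qed.

End PowerMaps.

Section DiagonalForms.
Variables (F : finFieldType) (n : nat).
Implicit Types (a : 'I_n -> F) (e : 'I_n -> nat) (x : {ffun 'I_n -> F}).

Definition diag_form a e x := \sum_j a j * x j ^+ e j.

Definition nonzero_coords x := [forall j, x j != 0].

Lemma card_nonzero_coords : #|[set x | nonzero_coords x]| = (#|F|.-1 ^ n)%N.
Proof.
rewrite -[n in (_ ^ n)%N]card_ord -(cardC1 (0 : F)) -card_ffun_on.
apply: eq_card => x; rewrite inE.
by apply/forallP/ffun_onP => x0 j; have := x0 j; rewrite !inE.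
Qed.

Lemma diag_form_map_coords a e x :
  diag_form a e x = diag_form a (fun=> 1%N) (map_coords (fun j t => t ^+ e j) x).
Proof. by apply: eq_bigr => j _; rewrite ffunE. Qed.

Lemma nonzero_coords_map_coords (e : 'I_n -> nat) x : (forall j, 0 < e j)%N ->
  nonzero_coords (map_coords (fun j t => t ^+ e j) x) = nonzero_coords x.
Proof. by move=> e0; apply: eq_forallb => j; rewrite ffunE expf_eq0 e0. Qed.

Lemma card_diag_form_gcdn (P : F -> bool -> bool) a (m : 'I_n -> nat) :
  (forall j, 0 < m j)%N ->
  #|[set x | P (diag_form a m x) (nonzero_coords x)]|
  = #|[set x | P (diag_form a (fun j => gcdn (m j) #|F|.-1) x) (nonzero_coords x)]|.
Proof.
move=> m0; have d0 j : (0 < gcdn (m j) #|F|.-1)%N by rewrite gcdn_gt0 m0.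
pose Q y := P (diag_form a (fun=> 1%N) y) (nonzero_coords y).
transitivity #|[set x | Q (map_coords (fun j t => t ^+ m j) x)]|.
  by apply: eq_card => x; rewrite !inE /Q -diag_form_map_coords nonzero_coords_map_coords.
rewrite (@card_map_coords_eq _ _ _ _ (fun j t => t ^+ gcdn (m j) #|F|.-1) Q
  (fun j s => card_expr_fibre_gcdn s (m0 j))).
by apply: eq_card => x; rewrite !inE /Q -diag_form_map_coords nonzero_coords_map_coords.
Qed.

End DiagonalForms.

Section TorusAction.
Variables (F : finFieldType) (n : nat) (a : 'I_n -> F) (b : F).
Variables (m kk : 'I_n -> nat) (k M : nat).
Hypotheses (b0 : b != 0) (k0 : (0 < k)%N) (m_dvd_M : forall j, (m j %| M)%N).
Implicit Types (x y : {ffun 'I_n -> F}) (t : F).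
Local Notation q := #|F|.
Local Notation w := (\sum_j kk j * (M %/ m j))%N.

Definition power_eq x := diag_form a m x ^+ k == b * \prod_j x j ^+ kk j.

Definition torus_act t x := [ffun j => t ^+ (M %/ m j) * x j].

Lemma diag_form_act t x : diag_form a m (torus_act t x) = t ^+ M * diag_form a m x.
Proof.
rewrite /diag_form mulr_sumr; apply: eq_bigr => j _.
by rewrite ffunE exprMn -exprM divnK // mulrCA.
Qed.

Lemma monomial_act t x :
  \prod_j torus_act t x j ^+ kk j = t ^+ w * \prod_j x j ^+ kk j.
Proof.
rewrite -prodrXr -big_split /=; apply: eq_bigr => j _.
by rewrite ffunE exprMn -exprM mulnC.
Qed.

Lemma torus_act_inj t : t != 0 -> injective (torus_act t).
Proof.
move=> t0 x y /ffunP xy; apply/ffunP => j; have := xy j; rewrite !ffunE.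
by apply: mulfI; rewrite expf_neq0.
Qed.

Lemma nonzero_coords_act t x : t != 0 -> nonzero_coords (torus_act t x) = nonzero_coords x.
Proof. by move=> t0; apply: eq_forallb => j; rewrite ffunE mulf_eq0 negb_or expf_neq0. Qed.

Lemma power_eq_act t y : t != 0 -> nonzero_coords y ->
  power_eq (torus_act t y)
  = (t ^ (w%:Z - (k * M)%N%:Z) == diag_form a m y ^+ k / (b * \prod_j y j ^+ kk j)).
Proof.
move=> t0 /forallP y0.
have rhs0 : b * \prod_j y j ^+ kk j != 0.
  by rewrite mulf_neq0 //; apply/prodf_neq0 => j _; rewrite expf_neq0.
rewrite expfzDr // -exprnN -exprnP eqr_div ?expf_neq0 //.
rewrite /power_eq diag_form_act monomial_act exprMn -exprM mulnC.
by rewrite mulrCA [_ * t ^+ _]mulrC eq_sym.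
Qed.

Hypothesis w_cop : gcdz (w%:Z - (k * M)%N%:Z) q.-1 = 1.

Lemma card_orbit_solutions y : nonzero_coords y ->
  #|[set t | (t != 0) && power_eq (torus_act t y)]| = (diag_form a m y != 0).
Proof.
move=> y0.
transitivity #|[set t | (t != 0) &&
    (t ^ (w%:Z - (k * M)%N%:Z) == diag_form a m y ^+ k / (b * \prod_j y j ^+ kk j))]|.
  by apply: eq_card => t; rewrite !inE; case: eqVneq => //= t0; rewrite power_eq_act.
have prod0 : \prod_j y j ^+ kk j != 0.
  by apply/prodf_neq0 => j _; rewrite expf_neq0 //; apply: (forallP y0).
rewrite card_exprz_eq // mulf_eq0 invr_eq0 expf_eq0 k0 mulf_eq0 (negPf b0).
by rewrite (negPf prod0) /= orbF.
Qed.

Lemma card_nonzero_solutions :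
  (#|[set x | power_eq x && nonzero_coords x]| * q.-1
   = #|[set x | (diag_form a m x != 0%R) && nonzero_coords x]|)%N.
Proof.
rewrite -[q.-1](cardC1 (0 : F)) mulnC -sum_nat_const.
transitivity (\sum_(t in predC1 0%R)
                \sum_y (power_eq (torus_act t y) && nonzero_coords y : nat))%N.
  apply: eq_bigr => t; rewrite inE => t0.
  rewrite card_set_sum (reindex_inj (torus_act_inj t0)) /=.
  by apply: eq_bigr => y _; rewrite nonzero_coords_act.
rewrite exchange_big card_set_sum /=; apply: eq_bigr => y _.
have [y0 | ny0] := boolP (nonzero_coords y); last first.
  by rewrite andbF big1 // => t _; rewrite andbF.
rewrite andbT -card_orbit_solutions // card_set_sum big_mkcond /=.
by apply: eq_bigr => t _; rewrite inE andbT; case: (t != 0%R).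
Qed.

Hypothesis kk0 : forall j, (0 < kk j)%N.

Lemma power_eq_zero_coord x : ~~ nonzero_coords x -> power_eq x = (diag_form a m x == 0).
Proof.
case/forallPn => i /negPn /eqP xi.
by rewrite /power_eq (bigD1 i) //= xi expr0n gtn_eqF // mul0r mulr0 expf_eq0 k0.
Qed.

Lemma card_power_eq_solutions : (0 < n)%N ->
  (#|[set x | power_eq x]|%:R : rat)
  = q.-1%:R ^+ n.-1 + #|[set x | diag_form a m x == 0]|%:R
    - q%:R / q.-1%:R * #|[set x | (diag_form a m x == 0) && nonzero_coords x]|%:R.
Proof.
move=> n0; set S := diag_form a m.
set A := #|[set x | power_eq x && nonzero_coords x]|.
set Z := #|[set x | (S x == 0) && nonzero_coords x]|.
set B := #|[set x | (S x == 0) && ~~ nonzero_coords x]|.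
have -> : #|[set x | power_eq x]| = (A + B)%N.
  rewrite (card_set_split _ (@nonzero_coords F n)); congr (_ + _)%N.
  apply: eq_card => x; rewrite !inE.
  by case: (boolP (nonzero_coords x)) => [_ | /power_eq_zero_coord ->]; rewrite ?andbF.
rewrite (card_set_split _ (@nonzero_coords F n)) -/Z -/B.
have AZ : (A * q.-1 + Z = q.-1 ^ n)%N.
  rewrite card_nonzero_solutions -card_nonzero_coords addnC.
  rewrite [RHS](card_set_split _ (fun x => S x == 0)).
  by congr (_ + _)%N; apply: eq_card => x; rewrite !inE andbC.
have q_gt1 : (1 < q)%N := card_finNzRing_gt1 F.
have q1 : q.-1%:R != 0 :> rat by rewrite pnatr_eq0 -lt0n -subn1 subn_gt0.
have -> : q%:R = q.-1%:R + 1 :> rat by rewrite natr1 prednK // ltnW.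
have Z_eq : Z%:R = q.-1%:R * q.-1%:R ^+ n.-1 - A%:R * q.-1%:R :> rat.
  by rewrite -exprS prednK // -natrM -natrX -AZ natrD natrM addrC addKr.
by rewrite !natrD Z_eq; field.
Qed.

End TorusAction.

Theorem theorem3 (F : finFieldType) (n : nat) (hn : (2 <= n)%N)
  (a : 'I_n -> F) (b : F) (ha : forall j, a j != 0) (hb : b != 0)
  (m : 'I_n -> nat) (k : nat) (kk : 'I_n -> nat)
  (hm : forall j, (0 < m j)%N) (hk : (0 < k)%N) (hkk : forall j, (0 < kk j)%N) :
  let q := #|F| in
  let M := (\big[lcmn/1%N]_(j < n) m j)%N in
  let d := fun j => gcdn (m j) q.-1 in
  gcdz ((\sum_(j < n) ((kk j * (M %/ m j))%N)%:Z) - (k * M)%N%:Z) (q.-1)%:Z = 1 ->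
  ((Ncount (fun x : {ffun 'I_n -> F} =>
       (\sum_(j < n) a j * x j ^+ m j) ^+ k == b * \prod_(j < n) x j ^+ kk j))%:R : rat)
  = (q.-1)%:R ^+ n.-1
    + (Ncount (fun x : {ffun 'I_n -> F} => \sum_(j < n) a j * x j ^+ d j == 0))%:R
    - q%:R / (q.-1)%:R
      * (Nstar (fun x : {ffun 'I_n -> F} => \sum_(j < n) a j * x j ^+ d j == 0))%:R.
Proof.
move=> q M d cop.
have m_dvd_M j : (m j %| M)%N by apply: (biglcmn_sup j).
have w_cop : gcdz ((\sum_j kk j * (M %/ m j))%N%:Z - (k * M)%N%:Z) q.-1 = 1.
  by rewrite (big_morph Posz PoszD (erefl 0%:Z)).
have := card_power_eq_solutions a hb hk m_dvd_M w_cop hkk (ltnW hn).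
rewrite (card_diag_form_gcdn (fun s _ => s == 0) a hm).
rewrite (card_diag_form_gcdn (fun s nz => (s == 0) && nz) a hm).
exact.
Qed.
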